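(* Let $\boldsymbol{B} = [\boldsymbol{B}[1]\ \cdots\ \boldsymbol{B}[n]]$ be a block dictionary with pairwise disjoint block subspaces $\mathcal{S}_i=\operatorname{span}(\boldsymbol{B}[i])$ of dimensions $d_i$, and let $k\ge 1$. For each $i$ let $\bar{\boldsymbol{B}}[i]\in\mathbb{R}^{D\times d_i}$ be an arbitrary full column-rank submatrix of $\boldsymbol{B}[i]$, and set $\bar{\boldsymbol{B}} = [\bar{\boldsymbol{B}}[1]\ \cdots\ \bar{\boldsymbol{B}}[n]]$. Then every signal $\boldsymbol{y}\in\mathbb{R}^D$ that admits a $k$-block-sparse representation admits a unique one (i.e. the blocks $\{i_l\}$ and the vectors $\{\boldsymbol{s}_{i_l}\}$ generating a $k$-block-sparse representation are uniquely determined) if and only if $\bar{\boldsymbol{B}}\bar{\boldsymbol{c}}\neq\boldsymbol{0}$ for every nonzero $2k$-block-sparse vector $\bar{\boldsymbol{c}}$.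
   Context: $\boldsymbol{B}\in\mathbb{R}^{D\times N}$ has unit-Euclidean-norm columns and blocks $\boldsymbol{B}[i]\in\mathbb{R}^{D\times m_i}$ (possibly with linearly dependent columns); $\mathcal{S}_i$ is the column span of $\boldsymbol{B}[i]$, $d_i=\dim\mathcal{S}_i$, and $\mathcal{S}_i\cap\mathcal{S}_j=\{0\}$ for $i\ne j$. A vector $\bar{\boldsymbol{c}}=(\bar{\boldsymbol{c}}[1];\dots;\bar{\boldsymbol{c}}[n])$ with $\bar{\boldsymbol{c}}[i]\in\mathbb{R}^{d_i}$ is $2k$-block-sparse if at most $2k$ of its blocks $\bar{\boldsymbol{c}}[i]$ are nonzero. A $k$-block-sparse representation of $\boldsymbol{y}$ is an expression $\boldsymbol{y}=\sum_{i\in\Lambda}\boldsymbol{s}_i$ with $\Lambda\subseteq\{1,\dots,n\}$, $|\Lambda|\le k$, $\boldsymbol{s}_i\in\mathcal{S}_i\setminus\{0\}$; it is unique if any two such expressions have the same $\Lambda$ and the same vectors $\boldsymbol{s}_i$. *)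

From HB Require Import structures.
From mathcomp Require Import all_boot all_order all_algebra.
From mathcomp Require Import reals.
Set Implicit Arguments. Unset Strict Implicit. Unset Printing Implicit Defensive.
Import Order.TTheory GRing.Theory Num.Theory.
Local Open Scope ring_scope.

Definition in_colspan (R : realType) (D m : nat) (A : 'M[R]_(D, m)) (v : 'cV[R]_D) : Prop :=
  exists x : 'cV[R]_m, v = A *m x.

Definition block_rep (R : realType) (D n : nat) (m : 'I_n -> nat)
    (B : forall i : 'I_n, 'M[R]_(D, m i)) (k : nat) (y : 'cV[R]_D)
    (Lam : {set 'I_n}) (s : 'I_n -> 'cV[R]_D) : Prop :=
  (#|Lam| <= k)%N /\
  (forall i, i \in Lam -> in_colspan (B i) (s i) /\ s i != 0) /\
  y = \sum_(i in Lam) s i.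

From HB Require Import structures.
From mathcomp Require Import all_boot all_order all_algebra.
From mathcomp Require Import reals.
From mathcomp Require Import zify.
Import Order.TTheory GRing.Theory Num.Theory.
Local Open Scope ring_scope.
Set Implicit Arguments. Unset Strict Implicit. Unset Printing Implicit Defensive.

(* A full column-rank submatrix [Bbar i] spans the same space as [B i], so
   k-block-sparse representations are the same for [B] and [Bbar], and each
   block vector has unique coordinates [c i] in [Bbar i].  Two distinct
   representations of one [y] subtract to a nonzero 2k-block-sparse [c] with
   [Bbar c = 0]; conversely, splitting the support of such a [c] into two
   halves of size at most k gives two distinct representations of one [y]. *)

Section ColumnSpan.

Variables (R : realType) (D : nat).

Lemma in_colspanP m (A : 'M[R]_(D, m)) v : in_colspan A v <-> (v^T <= A^T)%MS.
Proof.
split=> [[x ->]|/submxP [x hx]]; first by rewrite trmx_mul submxMl.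
by exists x^T; rewrite -[v]trmxK hx trmx_mul trmxK.
Qed.

Lemma in_colspan_eqmx m m' (A : 'M[R]_(D, m)) (A' : 'M[R]_(D, m')) :
  (A^T == A'^T)%MS -> forall v : 'cV[R]_D, in_colspan A v <-> in_colspan A' v.
Proof.
by move/eqmxP=> eqA v; split=> /in_colspanP vA; apply/in_colspanP; rewrite ?eqA // -eqA.
Qed.

Lemma colsub_eqmx m r (A : 'M[R]_(D, m)) (f : 'I_r -> 'I_m) :
  \rank (colsub f A) = \rank A -> ((colsub f A)^T == A^T)%MS.
Proof.
move=> rkf; have subA : ((colsub f A)^T <= A^T)%MS.
  by rewrite trmx_mxsub rowsub_sub.
by rewrite -(geq_leqif (mxrank_leqif_eq subA)) !mxrank_tr rkf.
Qed.

Lemma mulmx_full_col_eq0 m (A : 'M[R]_(D, m)) (x : 'cV[R]_m) :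
  \rank A = m -> (A *m x == 0) = (x == 0).
Proof.
move=> rkA; rewrite -trmx_eq0 trmx_mul mulmx_free_eq0 ?trmx_eq0 //.
by rewrite /row_free mxrank_tr rkA.
Qed.

Definition colcoef m (A : 'M[R]_(D, m)) (v : 'cV[R]_D) : 'cV[R]_m :=
  (v^T *m pinvmx A^T)^T.

Lemma colcoefK m (A : 'M[R]_(D, m)) v : in_colspan A v -> A *m colcoef A v = v.
Proof.
move/in_colspanP=> vA.
by rewrite /colcoef -[A]trmxK -trmx_mul trmxK mulmxKpV // trmxK.
Qed.

End ColumnSpan.

Lemma block_rep_eq_colspan (R : realType) (D n : nat) (m m' : 'I_n -> nat)
    (B : forall i, 'M[R]_(D, m i)) (B' : forall i, 'M[R]_(D, m' i)) k y L s :
  (forall i v, in_colspan (B i) v <-> in_colspan (B' i) v) ->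
  block_rep B k y L s <-> block_rep B' k y L s.
Proof.
by move=> eqB; split=> [] [cardL [repL ->]]; do 2 split=> //; move=> i /repL [/eqB].
Qed.

Lemma eq_set_of_masks (T : finType) (V : zmodType) (L1 L2 : {set T}) (s1 s2 : T -> V) :
  {in L1, forall i, s1 i != 0} -> {in L2, forall i, s2 i != 0} ->
  (forall i, (if i \in L1 then s1 i else 0) = (if i \in L2 then s2 i else 0)) ->
  L1 = L2 /\ {in L1, s1 =1 s2}.
Proof.
move=> nz1 nz2 eqs; have eqL : L1 = L2.
  apply/setP=> i; have := eqs i.
  case: (boolP (i \in L1)) => i1; case: (boolP (i \in L2)) => i2 // e.
    by have := nz1 i i1; rewrite e eqxx.
  by have := nz2 i i2; rewrite -e eqxx.
by split=> // i i1; have := eqs i; rewrite i1 -eqL i1.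
Qed.

Lemma split_set_half (T : finType) (S : {set T}) k :
  (#|S| <= 2 * k)%N -> S != set0 ->
  exists2 S1 : {set T}, S1 \subset S &
    [/\ (#|S1| <= k)%N, (#|S :\: S1| <= k)%N & S1 != set0].
Proof.
move=> cardS nzS; pose S1 := [set x in take k (enum S)].
have S1S : S1 \subset S.
  by apply/subsetP=> x; rewrite inE => /mem_take; rewrite mem_enum.
have cardS1 : #|S1| = minn k #|S|.
  rewrite cardsE; move/card_uniqP: (take_uniq k (enum_uniq (mem S))) => ->.
  by rewrite size_take -cardE /minn; case: ltnP.
have posS : (0 < #|S|)%N by rewrite card_gt0.
exists S1 => //; split; first by rewrite cardS1 geq_minl.
  by rewrite cardsD (setIidPr S1S) cardS1; lia.
by rewrite -card_gt0 cardS1; lia.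
Qed.

Section BlockSparse.

Variables (R : realType) (D n : nat) (r : 'I_n -> nat).
Variable C : forall i : 'I_n, 'M[R]_(D, r i).
Hypothesis C_full : forall i, \rank (C i) = r i.

Implicit Types (c : forall i : 'I_n, 'cV[R]_(r i)) (L : {set 'I_n}).

Definition block_support c := [set i | c i != 0].

Lemma block_rep_sub_support c k L : L \subset block_support c -> (#|L| <= k)%N ->
  block_rep C k (\sum_(i in L) C i *m c i) L (fun i => C i *m c i).
Proof.
move=> /subsetP Lc cardL; split=> //; split=> // i /Lc.
by rewrite inE mulmx_full_col_eq0 // => nz; split; first by exists (c i).
Qed.

Lemma block_rep_not_unique c k :
  (exists i, c i != 0) -> (#|block_support c| <= 2 * k)%N ->
  \sum_(i < n) C i *m c i = 0 ->
  exists y L1 s1 L2 s2,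
    [/\ block_rep C k y L1 s1, block_rep C k y L2 s2 & L1 != L2].
Proof.
move=> [i0 nz0] cardS sum0; pose S := block_support c.
have [|S1 S1S [cardS1 cardS2 nzS1]] := split_set_half cardS.
  by apply/set0Pn; exists i0; rewrite inE.
pose c' i := - c i.
have S'E : block_support c' = S by apply/setP=> i; rewrite !inE oppr_eq0.
have rep1 := block_rep_sub_support S1S cardS1.
have rep2 := @block_rep_sub_support c' k (S :\: S1).
rewrite S'E subsetDl in rep2; have {rep2} rep2 := rep2 isT cardS2.
suff sumE : \sum_(i in S :\: S1) C i *m c' i = \sum_(i in S1) C i *m c i.
  rewrite sumE in rep2; do 5 eexists; split; [exact: rep1|exact: rep2|].
  case/set0Pn: nzS1 => x xS1; apply/eqP=> eqS.
  by move: (xS1); rewrite {1}eqS inE xS1.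
have sumS : \sum_(i in S) C i *m c i = 0.
  rewrite -[RHS]sum0 [RHS](bigID (mem S)) /= [X in _ = _ + X]big1 ?addr0 // => i.
  by rewrite inE negbK => /eqP ->; rewrite mulmx0.
apply/eqP; rewrite /c' (eq_bigr _ (fun i _ => mulmxN _ _)) sumrN eq_sym -addr_eq0.
by rewrite -{1}(setIidPr S1S) -big_setID sumS.
Qed.

Definition rep_coef L (s : 'I_n -> 'cV[R]_D) i : 'cV[R]_(r i) :=
  if i \in L then colcoef (C i) (s i) else 0.

Lemma mul_rep_coef k y L s i : block_rep C k y L s ->
  C i *m rep_coef L s i = if i \in L then s i else 0.
Proof.
move=> [_ [repL _]]; rewrite /rep_coef; case: ifP => iL; last exact: mulmx0.
exact/colcoefK/(repL i iL).1.
Qed.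

Lemma block_rep_unique k :
  (forall c, (exists i, c i != 0) -> (#|block_support c| <= 2 * k)%N ->
     \sum_(i < n) C i *m c i != 0) ->
  forall y L1 s1 L2 s2, block_rep C k y L1 s1 -> block_rep C k y L2 s2 ->
    L1 = L2 /\ {in L1, s1 =1 s2}.
Proof.
move=> nullC y L1 s1 L2 s2 rep1 rep2.
pose c i := rep_coef L1 s1 i - rep_coef L2 s2 i.
have mul_c i : C i *m c i =
    (if i \in L1 then s1 i else 0) - (if i \in L2 then s2 i else 0).
  by rewrite mulmxBr (mul_rep_coef i rep1) (mul_rep_coef i rep2).
have sum0 : \sum_(i < n) C i *m c i = 0.
  rewrite (eq_bigr _ (fun i _ => mul_c i)) sumrB -!big_mkcond /=.
  by rewrite -rep1.2.2 -rep2.2.2 subrr.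
have cardc : (#|block_support c| <= 2 * k)%N.
  have supp_c : block_support c \subset L1 :|: L2.
    apply/subsetP=> i; rewrite !inE /c /rep_coef; apply: contraR.
    by rewrite negb_or => /andP [/negbTE -> /negbTE ->]; rewrite subrr.
  have [cardL1 _] := rep1; have [cardL2 _] := rep2.
  have := leq_trans (subset_leq_card supp_c) (leq_card_setU L1 L2); lia.
have c0 i : c i = 0.
  apply/eqP/contraT=> nz.
  by have := nullC c (ex_intro _ i nz) cardc; rewrite sum0 eqxx.
apply: eq_set_of_masks => [i /(rep1.2.1 i) []|i /(rep2.2.1 i) []|i] //.
by apply/eqP; rewrite -subr_eq0 -mul_c c0 mulmx0.
Qed.

End BlockSparse.

Theorem proposition2 (R : realType) (D n : nat) (m : 'I_n -> nat)
    (B : forall i : 'I_n, 'M[R]_(D, m i))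
    (Bunit : forall (i : 'I_n) (j : 'I_(m i)), \sum_(r < D) (B i r j) ^+ 2 = 1)
    (Bdisj : forall i j : 'I_n, i != j -> forall v : 'cV[R]_D,
        in_colspan (B i) v -> in_colspan (B j) v -> v = 0)
    (k : nat) (hk : (1 <= k)%N)
    (f : forall i : 'I_n, 'I_(\rank (B i)) -> 'I_(m i))
    (finj : forall i, injective (f i))
    (frank : forall i, \rank (colsub (f i) (B i)) = \rank (B i)) :
  (forall y : 'cV[R]_D,
     (exists Lam s, block_rep B k y Lam s) ->
     forall Lam1 s1 Lam2 s2,
       block_rep B k y Lam1 s1 -> block_rep B k y Lam2 s2 ->
       Lam1 = Lam2 /\ (forall i, i \in Lam1 -> s1 i = s2 i))
  <->
  (forall c : forall i : 'I_n, 'cV[R]_(\rank (B i)),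
     (exists i, c i != 0) ->
     (#|[set i : 'I_n | c i != 0%R :> 'cV[R]_(\rank (B i))]| <= 2 * k)%N ->
     \sum_(i < n) colsub (f i) (B i) *m c i != 0).
Proof.
pose Bbar i := colsub (f i) (B i).
have repE y L s : block_rep B k y L s <-> block_rep Bbar k y L s.
  apply: block_rep_eq_colspan => i v.
  by apply: iff_sym; apply/in_colspan_eqmx/colsub_eqmx.
split=> [uniqB c nzc cardc | nullB y _ L1 s1 L2 s2 /repE rep1 /repE rep2].
  apply/negP=> /eqP sum0.
  have [y [L1 [s1 [L2 [s2 [rep1 rep2 neqL]]]]]] :=
    block_rep_not_unique frank nzc cardc sum0.
  move/repE: (rep1) => repB1; move/repE: rep2 => repB2.
  have [eqL _] := uniqB y (ex_intro _ L1 (ex_intro _ s1 repB1)) _ _ _ _ repB1 repB2.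
  by rewrite eqL eqxx in neqL.
exact: (block_rep_unique nullB rep1 rep2).
Qed.
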